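(* Let $(W,S)$ be a finitely generated Coxeter system and $u<v$ in $W$. If $u'$ covers $u$ in the interval $[u,v]$, then $u'=(v^{S(u)})_{S(u)\cup\{s\}}\,u$ for some $s\in\mathrm{Des}(v^{S(u)})$, and $C(u')=C(u)\setminus\{s\}$.
   Context: $(W,S)$ is a finitely generated Coxeter system with length function $\ell$. For $w\in W$, $S(w)\subseteq S$ is the set of simple reflections appearing in a (any) reduced expression of $w$, $C(w)=S\setminus S(w)$, and $\mathrm{Des}(w)=\{s\in S:\ell(ws)<\ell(w)\}$. For $I\subseteq S$, $W_I$ is the parabolic subgroup generated by $I$, $X_I=\{u\in W:\ell(us)>\ell(u)\ \forall s\in I\}$, and every $w\in W$ factors uniquely as $w=w^Iw_I$ with $w^I\in X_I$, $w_I\in W_I$ (parabolic components along $I$). The partial order on $W$: $u\le v$ iff $v_{S(u)}=u$. An element $u'$ covers $u$ in $[u,v]$ if $u<u'\le v$ and there is no $w$ with $u<w<u'$. *)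

From mathcomp Require Import all_boot.
From Stdlib Require Import ClassicalEpsilon.

Set Implicit Arguments.
Unset Strict Implicit.
Unset Printing Implicit Defensive.

Record group := Group {
  gcar :> Type;
  gmul : gcar -> gcar -> gcar;
  gone : gcar;
  ginv : gcar -> gcar;
  gmulA : forall x y z, gmul x (gmul y z) = gmul (gmul x y) z;
  gmul1g : forall x, gmul gone x = x;
  gmulVg : forall x, gmul (ginv x) x = gone
}.

Arguments gmul {g}.
Arguments gone {g}.
Arguments ginv {g}.

Fixpoint gpow (G : group) (x : G) (n : nat) : G :=
  match n with O => gone | S n => gmul x (gpow x n) end.

Definition is_hom (G H : group) (phi : G -> H) : Prop :=
  forall x y, phi (gmul x y) = gmul (phi x) (phi y).

Definition wprod (W : group) (S : finType) (e : S -> W) (ws : seq S) : W :=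
  foldr (fun a x => gmul (e a) x) gone ws.

(* (W, e(S)) is a Coxeter system: e(S) is a set of involutions (e
   injective, e a <> 1, e a ^2 = 1) generating W, and W is presented by
   the generators S subject to the relations a^2 = 1 and (a b)^{m(a,b)} = 1,
   m(a,b) the order of e a * e b in W (no relation if infinite).  The
   presentation is stated through its universal property. *)
Definition coxeter_system (W : group) (S : finType) (e : S -> W) : Prop :=
  [/\ injective e,
      (forall a, e a <> gone),
      (forall a, gmul (e a) (e a) = gone),
      (forall w : W, exists ws, wprod e ws = w) &
      (forall (G : group) (f : S -> G),
         (forall a, gmul (f a) (f a) = gone) ->
         (forall a b n, gpow (gmul (e a) (e b)) n = gone ->
                        gpow (gmul (f a) (f b)) n = gone) ->
         exists phi : W -> G, is_hom phi /\ forall a, phi (e a) = f a)].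

Section Cox.
Variables (W : group) (S : finType) (e : S -> W).

Definition is_length (w : W) (n : nat) : Prop :=
  (exists ws, wprod e ws = w /\ size ws = n) /\
  (forall ws, wprod e ws = w -> n <= size ws).

Definition ell (w : W) : nat := epsilon (inhabits 0) (is_length w).

Definition supp (w : W) (s : S) : Prop :=
  exists ws, [/\ wprod e ws = w, size ws = ell w & s \in ws].

Definition csupp (w : W) (s : S) : Prop := ~ supp w s.

Definition Des (w : W) (s : S) : Prop := ell (gmul w (e s)) < ell w.

Definition in_parab (I : S -> Prop) (w : W) : Prop :=
  exists ws, wprod e ws = w /\ forall a, a \in ws -> I a.

(* X_I: minimal coset representatives *)
Definition in_X (I : S -> Prop) (u : W) : Prop :=
  forall a, I a -> ell u < ell (gmul u (e a)).

(* parabolic components w = w^I w_I *)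
Definition pcomp_hi (I : S -> Prop) (w : W) : W :=
  epsilon (inhabits gone)
    (fun u => in_X I u /\ in_parab I (gmul (ginv u) w)).

Definition pcomp_lo (I : S -> Prop) (w : W) : W :=
  gmul (ginv (pcomp_hi I w)) w.

Definition cle (u v : W) : Prop := pcomp_lo (supp u) v = u.
Definition clt (u v : W) : Prop := cle u v /\ u <> v.

Definition covers_in (u v u' : W) : Prop :=
  [/\ clt u u', cle u' v & ~ exists w, clt u w /\ clt w u'].

End Cox.

From Pilot Require Import Defs.
From mathcomp Require Import all_boot zify.
From Stdlib Require Import ClassicalEpsilon ProofIrrelevance FunctionalExtensionality.
Set Implicit Arguments.
Unset Strict Implicit.
Unset Printing Implicit Defensive.

(* Tits' action of W on (reflection, sign) pairs shows that the parity of the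
   number of times a word crosses a given reflection depends only on the
   element it represents.  A reduced word therefore crosses each reflection at
   most once, which yields the exchange condition, and with it the standard
   facts on parabolic subgroups: reduced words of elements of W_I only use
   letters of I, and w = w^I w_I with lengths adding up.

   For the theorem write v = x u and u' = y u with x = v^S(u), y = u'^S(u).
   From u' <= v one gets x_S(u') = y, so x = x^S(u') y.  Take a right descent
   s of y in S(y), a subset of S(u'), and K = S(u) + {s}.  Then s is still a
   descent of y_K, u < y_K u <= u', and the covering hypothesis forces
   u' = y_K u; moreover x_K = y_K and s is a descent of x because lengths add
   along x = x^S(u') y.  Finally S(u') = K: otherwise u' lies in W_S(u),
   which together with u <= u' forces u' = u. *)

Section GroupLemmas.
Variable G : group.
Implicit Types x y z : G.

Lemma gmulgV x : gmul x (ginv x) = gone.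
Proof.
rewrite -[gmul x (ginv x)]gmul1g -{1}(gmulVg (ginv x)) -gmulA (gmulA (ginv x)).
by rewrite gmulVg gmul1g gmulVg.
Qed.

Lemma gmulg1 x : gmul x gone = x.
Proof. by rewrite -(gmulVg x) gmulA gmulgV gmul1g. Qed.

Lemma gmulKg x y : gmul (ginv x) (gmul x y) = y.
Proof. by rewrite gmulA gmulVg gmul1g. Qed.

Lemma gmulKVg x y : gmul x (gmul (ginv x) y) = y.
Proof. by rewrite gmulA gmulgV gmul1g. Qed.

Lemma gmulgK x y : gmul (gmul y x) (ginv x) = y.
Proof. by rewrite -gmulA gmulgV gmulg1. Qed.

Lemma gmulgKV x y : gmul (gmul y (ginv x)) x = y.
Proof. by rewrite -gmulA gmulVg gmulg1. Qed.

Lemma gmulI x y z : gmul x y = gmul x z -> y = z.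
Proof. by move=> h; rewrite -(gmulKg x y) h gmulKg. Qed.

Lemma gmulIr x y z : gmul y x = gmul z x -> y = z.
Proof. by move=> h; rewrite -(gmulgK x y) h gmulgK. Qed.

Lemma ginvK x : ginv (ginv x) = x.
Proof. by apply: (@gmulIr (ginv x)); rewrite gmulVg gmulgV. Qed.

Lemma ginvM x y : ginv (gmul x y) = gmul (ginv y) (ginv x).
Proof.
apply: (@gmulIr (gmul x y)); rewrite gmulVg -gmulA (gmulA (ginv x)) gmulVg gmul1g.
by rewrite gmulVg.
Qed.

Lemma ginv1 : ginv (@gone G) = gone.
Proof. by rewrite -{2}(gmulVg gone) gmulg1. Qed.

Lemma ginv_invol x : gmul x x = gone -> ginv x = x.
Proof. by move=> h; apply: (@gmulIr x); rewrite gmulVg h. Qed.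

Lemma gpowD x m n : gpow x (m + n) = gmul (gpow x m) (gpow x n).
Proof. by elim: m => [|m IH] /=; rewrite ?gmul1g // IH gmulA. Qed.

Definition gconj (g t : G) := gmul g (gmul t (ginv g)).

Lemma gconjM x y t : gconj (gmul x y) t = gconj x (gconj y t).
Proof. by rewrite /gconj ginvM !gmulA. Qed.

Lemma gconj1 t : gconj gone t = t.
Proof. by rewrite /gconj ginv1 gmul1g gmulg1. Qed.

End GroupLemmas.

Lemma hom_one (G H : group) (phi : G -> H) : is_hom phi -> phi gone = gone.
Proof.
move=> hphi; have h := hphi gone gone; rewrite gmulg1 in h.
by rewrite -[LHS](gmulKg (phi gone)) -h gmulVg.
Qed.

Record bij (T : Type) := Bij { bf : T -> T; bg : T -> T;
  bfK : cancel bf bg; bgK : cancel bg bf }.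

Lemma bij_ext T (p q : bij T) : bf p =1 bf q -> p = q.
Proof.
case: p => f1 g1 h1 k1; case: q => f2 g2 h2 k2 /= hf.
have ef : f1 = f2 by apply: functional_extensionality.
subst f2.
have eg : g1 = g2.
  by apply: functional_extensionality => x; rewrite -{1}(k2 x) h1.
subst g2; f_equal; apply: proof_irrelevance.
Qed.

Section BijGroup.
Variable T : Type.

(* [bmul p q] applies [p] first: words act on the right. *)
Definition bmul (p q : bij T) : bij T.
refine (@Bij T (fun x => bf q (bf p x)) (fun x => bg p (bg q x)) _ _).
- by move=> x; rewrite bfK bfK.
- by move=> x; rewrite bgK bgK.
Defined.
Definition bone : bij T := @Bij T id id (fun _ => erefl) (fun _ => erefl).
Definition binv (p : bij T) : bij T := @Bij T (bg p) (bf p) (@bgK _ p) (@bfK _ p).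

Lemma bmulA x y z : bmul x (bmul y z) = bmul (bmul x y) z.
Proof. exact: bij_ext. Qed.
Lemma bmul1 x : bmul bone x = x.
Proof. exact: bij_ext. Qed.
Lemma bmulV x : bmul (binv x) x = bone.
Proof. by apply: bij_ext => y /=; rewrite bgK. Qed.

Definition bijGroup : group := @Defs.Group (bij T) bmul bone binv bmulA bmul1 bmulV.
End BijGroup.

Definition boolGroup : group := @Defs.Group bool addb false id addbA addFb addbb.

Lemma wprod_cat (W : group) (S : finType) (e : S -> W) ws vs :
  wprod e (ws ++ vs) = gmul (wprod e ws) (wprod e vs).
Proof. by elim: ws => [|a ws IH] /=; rewrite ?gmul1g // IH gmulA. Qed.

Lemma wprod_rcons (W : group) (S : finType) (e : S -> W) ws a :
  wprod e (rcons ws a) = gmul (wprod e ws) (e a).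
Proof. by rewrite -cats1 wprod_cat /= gmulg1. Qed.

Lemma gpow_wprod (G : group) (S : finType) (f : S -> G) a b n :
  gpow (gmul (f a) (f b)) n = wprod f (flatten (nseq n [:: a; b])).
Proof. by elim: n => [|n IH] //=; rewrite IH gmulA. Qed.

Lemma subseq_catP (T : eqType) (rs s1 s2 : seq T) : subseq rs (s1 ++ s2) ->
  exists r1 r2, [/\ rs = r1 ++ r2, subseq r1 s1 & subseq r2 s2].
Proof.
case/subseqP=> m hm ->.
have hs : size (take (size s1) m) = size s1.
  by rewrite size_takel // hm size_cat leq_addr.
exists (mask (take (size s1) m) s1), (mask (drop (size s1) m) s2).
by rewrite -mask_cat // cat_take_drop !mask_subseq.
Qed.

(* The carrier of a group has no decidable equality; reflections are
   counted with an equality test decided classically. *)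
Definition classic_eqb (T : Type) (x y : T) : bool :=
  if excluded_middle_informative (x = y) then true else false.

Lemma classic_eqbP (T : Type) (x y : T) : reflect (x = y) (classic_eqb x y).
Proof. by rewrite /classic_eqb; case: excluded_middle_informative => h; constructor. Qed.

Section Reflections.
Variables (W : group) (S : finType) (e : S -> W).
Hypothesis e_sq : forall a, gmul (e a) (e a) = gone.

Lemma ginv_e a : ginv (e a) = e a.
Proof. exact: ginv_invol. Qed.

(* The reflections [s1 ... s(i-1) si s(i-1) ... s1] crossed by the word
   [s1 ... sk], in order. *)
Fixpoint refl_seq (ws : seq S) : seq W :=
  if ws is a :: ws' then e a :: map (gconj (e a)) (refl_seq ws') else [::].

(* Tits' action of a generator on (reflection, sign) pairs:
   (t, b) |-> (a t a, b + [t = a]). *)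
Definition refl_act a (x : W * bool) : W * bool :=
  (gmul (e a) (gmul x.1 (e a)), addb x.2 (classic_eqb x.1 (e a))).

Lemma refl_actK a : cancel (refl_act a) (refl_act a).
Proof.
case=> t b; rewrite /refl_act /= !gmulA e_sq gmul1g -!gmulA e_sq gmulg1.
case: (classic_eqbP t (e a)) => [->|ht].
  by rewrite gmulA e_sq gmul1g; case: classic_eqbP => // _; rewrite -addbA addbb addbF.
case: classic_eqbP => [h2|]; last by rewrite !addbF.
case: ht; apply: (@gmulI _ (e a)); apply: (@gmulIr _ (e a)).
by rewrite -gmulA h2 -gmulA e_sq gmulg1.
Qed.

Definition refl_perm a : bijGroup (W * bool) :=
  Bij (refl_actK a) (refl_actK a).

Lemma refl_perm_wprod ws t b :
  bf (wprod refl_perm ws) (t, b) =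
  (gmul (ginv (wprod e ws)) (gmul t (wprod e ws)),
   addb b (odd (count (classic_eqb t) (refl_seq ws)))).
Proof.
elim: ws t b => [|a ws IH] t b /=; first by rewrite ginv1 gmul1g gmulg1 addbF.
rewrite IH /=; congr pair; first by rewrite ginvM ginv_e !gmulA.
rewrite oddD -addbA oddb count_map; congr (_ (+) (_ (+) odd _)).
apply: eq_count => r /=; apply/classic_eqbP/classic_eqbP => [<-|->];
  by rewrite /gconj ginv_e !gmulA e_sq gmul1g -!gmulA e_sq gmulg1.
Qed.

Lemma refl_seq_alt a b n :
  refl_seq (flatten (nseq n [:: a; b])) =
  map (fun k => gmul (gpow (gmul (e a) (e b)) k) (e a)) (iota 0 (n + n)).
Proof.
set g := gmul (e a) (e b).
elim: n => [|n IH] //=.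
rewrite IH addnS /= gmul1g -(addn0 2) iotaDl -!map_comp gmulg1.
congr (_ :: _ :: _); first by rewrite /gconj ginv_e !gmulA.
apply: eq_map => k /=.
have gc : gmul (gpow g k) g = gmul g (gpow g k).
  by rewrite -[g in gmul _ g]gmulg1 -[gmul g gone]/(gpow g 1) -gpowD addn1.
have gc2 x : gmul (gpow g k) (gmul (e a) (gmul (e b) x)) =
             gmul (e a) (gmul (e b) (gmul (gpow g k) x)).
  by rewrite !(gmulA (e a)) -/g gmulA gc -gmulA.
by rewrite /gconj !ginv_e add0n -!gmulA gc2.
Qed.

Lemma refl_seq_cat ws vs :
  refl_seq (ws ++ vs) = refl_seq ws ++ map (gconj (wprod e ws)) (refl_seq vs).
Proof.
elim: ws => [|a ws IH] /=; first by rewrite (eq_map (@gconj1 W)) map_id.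
rewrite IH map_cat -map_comp; congr (_ :: _ ++ _).
by apply: eq_map => t /=; rewrite gconjM.
Qed.

(* In the relation word (ab)^n every reflection is crossed an even number
   of times, since the k-th and (n+k)-th reflections coincide. *)
Lemma refl_seq_rel_even a b n t :
  gpow (gmul (e a) (e b)) n = gone ->
  ~~ odd (count (classic_eqb t) (refl_seq (flatten (nseq n [:: a; b])))).
Proof.
move=> hn; rewrite refl_seq_alt iotaD map_cat count_cat add0n.
have -> : iota n n = map (addn n) (iota 0 n) by rewrite -iotaDl addn0.
rewrite -map_comp !count_map.
rewrite (@eq_count _ _ (preim (fun k => gmul (gpow (gmul (e a) (e b)) k) (e a))
  (classic_eqb t))); first by rewrite addnn odd_double.
by move=> k /=; rewrite gpowD hn gmul1g.
Qed.

Lemma refl_perm_rel a b n :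
  gpow (gmul (e a) (e b)) n = gone ->
  gpow (gmul (refl_perm a) (refl_perm b)) n = gone.
Proof.
move=> hn; rewrite gpow_wprod; apply: bij_ext => [[t c]].
rewrite refl_perm_wprod -gpow_wprod hn ginv1 gmul1g gmulg1 /=.
by rewrite (negbTE (refl_seq_rel_even t hn)) addbF.
Qed.

End Reflections.

Section Length.
Variables (W : group) (S : finType) (e : S -> W).
Hypothesis hcox : coxeter_system e.

Lemma e_sq a : gmul (e a) (e a) = gone.
Proof. by case: hcox. Qed.

Lemma hom_wprod (G : group) (f : S -> G) (phi : W -> G) :
  is_hom phi -> (forall a, phi (e a) = f a) ->
  forall ws, phi (wprod e ws) = wprod f ws.
Proof.
move=> hphi phie; elim=> [|a ws IH] /=; first exact: hom_one.
by rewrite hphi phie IH.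
Qed.

Lemma odd_count_refl_seq ws vs t : wprod e ws = wprod e vs ->
  odd (count (classic_eqb t) (refl_seq e ws)) =
  odd (count (classic_eqb t) (refl_seq e vs)).
Proof.
case: hcox => _ _ _ _ univ.
have p2 a : gmul (refl_perm e_sq a) (refl_perm e_sq a) = gone.
  by apply: bij_ext => x /=; rewrite (refl_actK e_sq).
have [phi [hphi phie]] := univ _ _ p2 (refl_perm_rel e_sq).
move=> /(f_equal phi); rewrite !(hom_wprod hphi phie).
by move=> /(f_equal (fun p => (bf p (t, false)).2)); rewrite /= !refl_perm_wprod.
Qed.

Lemma odd_size_wprod ws vs : wprod e ws = wprod e vs -> odd (size ws) = odd (size vs).
Proof.
case: hcox => _ _ _ _ univ.
have rel a b n : gpow (gmul (e a) (e b)) n = gone ->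
    gpow (@gmul boolGroup true true) n = gone.
  by move=> _; elim: n => [|n IH] //=; rewrite IH.
have [phi [hphi phie]] := univ boolGroup (fun _ => true) (fun _ => erefl) rel.
have pw us : phi (wprod e us) = odd (size us).
  by rewrite (hom_wprod hphi phie); elim: us => [|a us IH] //=; rewrite IH.
by move=> h; rewrite -!pw h.
Qed.

Lemma is_length_exists w : exists n, is_length e w n.
Proof.
case: hcox => _ _ _ gen _.
have [ws <-] := gen w.
elim: {ws}(size ws) {-2}ws (leqnn (size ws)) => [|n IH] us hs.
  by exists 0; split=> [|vs _//]; exists [::]; case: us hs.
case: (classic (exists vs, wprod e vs = wprod e us /\ size vs < size us)).
  case=> vs [<- hlt]; apply: IH; by rewrite -ltnS (leq_trans hlt).
move=> hno; exists (size us); split; first by exists us.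
by move=> vs hv; rewrite leqNgt; apply/negP => hlt; apply: hno; exists vs.
Qed.

Lemma ell_spec w : is_length e w (ell e w).
Proof. exact: epsilon_spec (is_length_exists w). Qed.

Lemma ell_wprod ws : ell e (wprod e ws) <= size ws.
Proof. by case: (ell_spec (wprod e ws)) => _; apply. Qed.

Lemma reduced_word w : exists ws, wprod e ws = w /\ size ws = ell e w.
Proof. by case: (ell_spec w). Qed.

Lemma odd_ell_wprod ws : odd (ell e (wprod e ws)) = odd (size ws).
Proof. by have [vs [h1 <-]] := reduced_word (wprod e ws); apply: odd_size_wprod. Qed.

Lemma ell1 : ell e gone = 0.
Proof. by apply/eqP; rewrite -leqn0 (@ell_wprod [::]). Qed.

Lemma ell_eq0 w : ell e w = 0 -> w = gone.
Proof.
by move=> h; have [[|a ws] [hw hs]] := reduced_word w; [rewrite -hw | rewrite h in hs].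
Qed.

Lemma ell_e a : ell e (e a) = 1.
Proof.
have : ell e (e a) <= 1 by have := ell_wprod [:: a]; rewrite /= gmulg1.
case: (ell e (e a)) (@ell_eq0 (e a)) => [|[|]] // /(_ erefl).
by case: hcox => _ hne _ _ _ /hne.
Qed.

Lemma ell_mul_e w a :
  ell e (gmul w (e a)) = (ell e w).+1 \/ ell e w = (ell e (gmul w (e a))).+1.
Proof.
have [ws [hw hs]] := reduced_word w.
have [vs [hv hs']] := reduced_word (gmul w (e a)).
have h1 : ell e (gmul w (e a)) <= (ell e w).+1.
  by rewrite -hs -hw -wprod_rcons (leq_trans (ell_wprod _)) // size_rcons.
have h2 : ell e w <= (ell e (gmul w (e a))).+1.
  have hw' : wprod e (rcons vs a) = w by rewrite wprod_rcons hv -gmulA e_sq gmulg1.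
  by rewrite -{1}hw' (leq_trans (ell_wprod _)) // size_rcons hs'.
have h3 : odd (ell e (gmul w (e a))) = ~~ odd (ell e w).
  by rewrite -hs -hw -wprod_rcons odd_ell_wprod size_rcons.
case: (ltngtP (ell e (gmul w (e a))) (ell e w)) => h; [right|left|].
- by apply/eqP; rewrite eqn_leq h2 h.
- by apply/eqP; rewrite eqn_leq h1 h.
- by rewrite h in h3; case: (odd _) h3.
Qed.

Lemma Des_neq1 w s : Des e w s -> w <> gone.
Proof. by rewrite /Des => + h1; rewrite h1 gmul1g ell_e ell1. Qed.

Lemma delete_refl ws t : 0 < count (classic_eqb t) (refl_seq e ws) ->
  exists ws', [/\ subseq ws' ws, (size ws').+1 = size ws &
                  wprod e ws' = gmul t (wprod e ws)].
Proof.
elim: ws t => [|a ws IH] t //=.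
case: (classic_eqbP t (e a)) => [-> _|ht] /=.
  by exists ws; split=> //; [exact: subseq_cons | rewrite gmulA e_sq gmul1g].
rewrite add0n count_map => hc.
have eqc : count (preim (gconj (e a)) (classic_eqb t)) (refl_seq e ws) =
           count (classic_eqb (gconj (ginv (e a)) t)) (refl_seq e ws).
  apply: eq_count => r /=; apply/classic_eqbP/classic_eqbP => [->|<-];
    by rewrite /gconj ginvK !gmulA ?gmulVg ?gmulgV gmul1g ?gmulgKV ?gmulgK.
have [|ws' [h1 h2 h3]] := IH (gconj (ginv (e a)) t); first by rewrite -eqc.
exists (a :: ws'); split=> /=; rewrite ?eqxx ?h2 //.
by rewrite h3 /gconj ginvK !gmulA gmulgV gmul1g.
Qed.

Lemma count_refl_seq_gt1 ws t : 1 < count (classic_eqb t) (refl_seq e ws) ->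
  exists vs, size vs < size ws /\ wprod e vs = wprod e ws.
Proof.
elim: ws t => [|a ws IH] t //=; rewrite count_map.
have -> : count (preim (gconj (e a)) (classic_eqb t)) (refl_seq e ws) =
           count (classic_eqb (gconj (e a) t)) (refl_seq e ws).
  apply: eq_count => r /=; apply/classic_eqbP/classic_eqbP => [->|<-];
    by rewrite /gconj !(ginv_e e_sq) !gmulA e_sq gmul1g -gmulA e_sq gmulg1.
case: (classic_eqbP t (e a)) => [->|_] /= h.
  have [|ws' [_ h2 h3]] := @delete_refl ws (e a).
    by move: h; rewrite /gconj (ginv_e e_sq) e_sq gmulg1; case: (count _ _).
  by exists ws'; rewrite h2 h3.
by have [vs [h1 h2]] := IH _ h; exists (a :: vs); rewrite /= h2.
Qed.

Lemma reduced_count_refl_seq ws t : size ws = ell e (wprod e ws) ->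
  count (classic_eqb t) (refl_seq e ws) <= 1.
Proof.
move=> hs; rewrite leqNgt; apply/negP => /count_refl_seq_gt1 [vs [h1 h2]].
by have := ell_wprod vs; rewrite h2 -hs leqNgt h1.
Qed.

Lemma exchange ws a : size ws = ell e (wprod e ws) ->
  ell e (gmul (wprod e ws) (e a)) < ell e (wprod e ws) ->
  exists ws', [/\ subseq ws' ws, (size ws').+1 = size ws &
                  wprod e ws' = gmul (wprod e ws) (e a)].
Proof.
set w := wprod e ws => hs hlt.
set t := gconj w (e a).
have [vs [hv hvs]] := reduced_word (gmul w (e a)).
have hw : wprod e (rcons vs a) = w by rewrite wprod_rcons hv -gmulA e_sq gmulg1.
have hl : ell e w = (ell e (gmul w (e a))).+1.
  by case: (ell_mul_e w a) => // h; rewrite h ltnNge leqnSn in hlt.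
have hred : size (rcons vs a) = ell e (wprod e (rcons vs a)).
  by rewrite hw size_rcons hvs hl.
have hrefl : refl_seq e (rcons vs a) = refl_seq e vs ++ [:: t].
  rewrite -cats1 refl_seq_cat /= hv /t /gconj ginvM (ginv_e e_sq).
  by rewrite -!gmulA (gmulA (e a) (e a)) e_sq gmul1g.
have hodd : odd (count (classic_eqb t) (refl_seq e (rcons vs a))).
  move: (reduced_count_refl_seq t hred); rewrite hrefl count_cat /=.
  by case: classic_eqbP => // _; case: (count _ _) => [|[|]].
rewrite (odd_count_refl_seq _ hw) in hodd.
have [|ws' [h1 h2 h3]] := @delete_refl ws t; first by case: (count _ _) hodd.
by exists ws'; rewrite h3 -/w /t /gconj -!gmulA gmulVg gmulg1.
Qed.

Lemma reduced_subword ws : exists rs,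
  [/\ subseq rs ws, wprod e rs = wprod e ws & size rs = ell e (wprod e ws)].
Proof.
elim/last_ind: ws => [|ws a [rs [h1 h2 h3]]]; first by exists [::]; rewrite ell1.
rewrite wprod_rcons; case: (ell_mul_e (wprod e ws) a) => h.
  exists (rcons rs a); rewrite wprod_rcons h2 size_rcons h3 h -!cats1.
  by split=> //; apply: cat_subseq h1 (subseq_refl _).
have hr : size rs = ell e (wprod e rs) by rewrite h2.
have hl : ell e (gmul (wprod e rs) (e a)) < ell e (wprod e rs) by rewrite h2 h.
have [rs' [g1 g2 g3]] := exchange hr hl; rewrite h2 in g3.
exists rs'; split=> //; first exact: subseq_trans g1 (subseq_trans h1 (subseq_rcons _ _)).
by apply/eqP; rewrite -eqSS g2 h3 h.
Qed.

End Length.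

Section Parabolic.
Variables (W : group) (S : finType) (e : S -> W).
Hypothesis hcox : coxeter_system e.
Implicit Types (I J K : S -> Prop) (w x y : W).

Local Notation e_sq := (e_sq hcox).
Local Notation ell_wprod := (ell_wprod hcox).
Local Notation reduced_word := (reduced_word hcox).
Local Notation ell_eq0 := (ell_eq0 hcox).

Lemma parab_reduced I w : in_parab e I w ->
  exists ws, [/\ wprod e ws = w, size ws = ell e w & forall a, a \in ws -> I a].
Proof.
case=> ws [<- hI]; have [rs [h1 h2 h3]] := reduced_subword hcox ws.
by exists rs; split=> // a /(mem_subseq h1) /hI.
Qed.

Lemma wprod_rev ws : wprod e (rev ws) = ginv (wprod e ws).
Proof.
elim: ws => [|a ws IH] /=; first by rewrite ginv1.
by rewrite rev_cons wprod_rcons IH ginvM (ginv_e e_sq).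
Qed.

Lemma parab1 I : in_parab e I gone.
Proof. by exists [::]. Qed.

Lemma parab_e I a : I a -> in_parab e I (e a).
Proof. by exists [:: a]; split=> [|b]; rewrite /= ?gmulg1 // inE => /eqP ->. Qed.

Lemma parab_mul I x y : in_parab e I x -> in_parab e I y -> in_parab e I (gmul x y).
Proof.
case=> xs [<- hx] [ys [<- hy]]; exists (xs ++ ys); rewrite wprod_cat.
by split=> // a; rewrite mem_cat => /orP [/hx|/hy].
Qed.

Lemma parab_inv I x : in_parab e I x -> in_parab e I (ginv x).
Proof.
by case=> xs [<- hx]; exists (rev xs); rewrite wprod_rev; split=> // a /[!mem_rev] /hx.
Qed.

Lemma parab_sub I J w : (forall a, I a -> J a) -> in_parab e I w -> in_parab e J w.
Proof. by move=> hIJ [ws [hw hI]]; exists ws; split=> // a /hI /hIJ. Qed.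

Lemma parab_eP I a : in_parab e I (e a) -> I a.
Proof.
move=> /parab_reduced [[|b [|c ws]] [hw hs hI]]; rewrite ell_e //= in hs.
move: hw; rewrite /= gmulg1; case: hcox => inj _ _ _ _ /inj <-.
by apply: hI; rewrite inE.
Qed.

(* A reduced word of an element of [W_I] only uses letters of [I]: peel off
   the last letter with the exchange condition. *)
Lemma reduced_parab_letters I ws : in_parab e I (wprod e ws) ->
  size ws = ell e (wprod e ws) -> forall a, a \in ws -> I a.
Proof.
elim/last_ind: ws => [|ws a IH] // hpar hred b.
rewrite wprod_rcons size_rcons in hpar hred.
have hws : size ws = ell e (wprod e ws).
  by have := ell_wprod ws; case: (ell_mul_e hcox (wprod e ws) a) => h; lia.
set w' := wprod e ws in hpar hred hws IH *.
have hlt : ell e (gmul (gmul w' (e a)) (e a)) < ell e (gmul w' (e a)).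
  by rewrite -gmulA e_sq gmulg1 -hws -hred.
have [vs [hv hvs hvI]] := parab_reduced hpar.
have hvs' : size vs = ell e (wprod e vs) by rewrite hv.
rewrite -hv in hlt; have [vs' [g1 _ g3]] := exchange hcox hvs' hlt.
have hw'I : in_parab e I w'.
  exists vs'; split; first by rewrite g3 hv -gmulA e_sq gmulg1.
  by move=> c /(mem_subseq g1) /hvI.
rewrite mem_rcons inE => /orP [/eqP ->|/(IH hw'I hws) //].
apply: parab_eP; rewrite -(gmulKg w' (e a)).
exact: parab_mul (parab_inv hw'I) hpar.
Qed.

Lemma supp_parab w : in_parab e (supp e w) w.
Proof. by have [ws [hw hs]] := reduced_word w; exists ws; split=> // a ha; exists ws. Qed.

Lemma parab_supp I w : in_parab e I w -> forall s, supp e w s -> I s.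
Proof. by move=> hI s [ws [hw hs]]; rewrite -hw in hI hs; apply: reduced_parab_letters. Qed.

Definition min_coset I x := forall y, in_parab e I y -> ell e x <= ell e (gmul x y).

Lemma min_coset_exists I w :
  exists x, in_parab e I (gmul (ginv x) w) /\ min_coset I x.
Proof.
suff: forall n x, ell e x <= n -> in_parab e I (gmul (ginv x) w) ->
        exists x, in_parab e I (gmul (ginv x) w) /\ min_coset I x.
  by move/(_ _ w (leqnn _)); apply; rewrite gmulVg; apply: parab1.
elim=> [|n IH] x hx hp; first by exists x; split=> // y _; rewrite (leq_trans hx).
case: (classic (exists y, in_parab e I y /\ ell e (gmul x y) < ell e x)).
  case=> y [hy hlt]; apply: (IH (gmul x y)); first by rewrite -ltnS (leq_trans hlt).
  by rewrite ginvM -gmulA; apply: parab_mul (parab_inv hy) hp.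
move=> hno; exists x; split=> // y hy; rewrite leqNgt; apply/negP => hlt.
by apply: hno; exists y.
Qed.

(* Split a reduced word of [x y] out of a reduced word of [x] followed by
   one of [y]; minimality of [x] forces the first part to be all of [x]. *)
Lemma ell_mul_min I x y : min_coset I x -> in_parab e I y ->
  ell e (gmul x y) = ell e x + ell e y.
Proof.
move=> hm hy.
have [xs [hx hxs]] := reduced_word x.
have [ys [hy' hys hyI]] := parab_reduced hy.
have [rs [h1 h2 h3]] := reduced_subword hcox (xs ++ ys).
rewrite wprod_cat hx hy' in h2 h3.
have [r1 [r2 [hr g1 g2]]] := subseq_catP h1.
have hr2 : in_parab e I (wprod e r2) by exists r2; split=> // a /(mem_subseq g2) /hyI.
have e1 : wprod e r1 = gmul x (gmul y (ginv (wprod e r2))).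
  by rewrite gmulA -h2 hr wprod_cat gmulgK.
have l1 : ell e x <= size r1.
  have := hm _ (parab_mul hy (parab_inv hr2)).
  by rewrite -e1 => h; apply: leq_trans h (ell_wprod _).
have er : r1 = xs.
  apply/eqP; have [_ <-] := size_subseq_leqif g1.
  by rewrite eqn_leq size_subseq // hxs.
have ey : wprod e r2 = y by apply: (@gmulI _ x); rewrite -h2 hr wprod_cat er hx.
apply/eqP; rewrite eqn_leq; apply/andP; split.
  by rewrite -{1}hx -{1}hy' -wprod_cat (leq_trans (ell_wprod _)) // size_cat hxs hys.
by rewrite -h3 hr size_cat er hxs leq_add2l -ey ell_wprod.
Qed.

Lemma min_coset_X I x : min_coset I x -> in_X e I x.
Proof.
move=> hm a ha; have := hm _ (parab_e ha).
by case: (ell_mul_e hcox x a) => ->; rewrite ?leqnSn // ltnn.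
Qed.

Lemma X_min_coset I x : in_X e I x -> min_coset I x.
Proof.
move=> hX; have [m [hz hm]] := min_coset_exists I x.
set z := gmul (ginv m) x in hz.
have hx : x = gmul m z by rewrite /z gmulKVg.
have [zs [hzw hzs hzI]] := parab_reduced hz.
case/lastP: zs hzw hzs hzI => [|zs a] hzw hzs hzI.
  by move: hx; rewrite -hzw /= gmulg1 => ->.
have ha : I a by apply: hzI; rewrite mem_rcons mem_head.
have hzs' : in_parab e I (wprod e zs).
  by exists zs; split=> // b hb; apply: hzI; rewrite mem_rcons inE hb orbT.
have := hX a ha.
have -> : gmul x (e a) = gmul m (wprod e zs).
  by rewrite hx -hzw wprod_rcons -!gmulA e_sq gmulg1.
rewrite (ell_mul_min hm hzs') hx (ell_mul_min hm hz) ltnNge leq_add2l.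
by rewrite -hzs size_rcons (leq_trans (ell_wprod _)).
Qed.

Lemma ell_mul_X I x y : in_X e I x -> in_parab e I y ->
  ell e (gmul x y) = ell e x + ell e y.
Proof. by move/X_min_coset; apply: ell_mul_min. Qed.

Lemma X_coset_uniq I x x' : in_X e I x -> in_X e I x' ->
  in_parab e I (gmul (ginv x) x') -> x = x'.
Proof.
move=> hx hx' hz.
have hz' : in_parab e I (gmul (ginv x') x).
  by rewrite -[x in gmul _ x]ginvK -ginvM; apply: parab_inv.
have l1 := ell_mul_X hx hz; have l2 := ell_mul_X hx' hz'.
rewrite gmulKVg in l1; rewrite gmulKVg in l2.
have /ell_eq0 h : ell e (gmul (ginv x) x') = 0 by lia.
by rewrite -[x'](gmulKVg x) h gmulg1.
Qed.

Lemma pcomp_hi_spec I w :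
  in_X e I (pcomp_hi e I w) /\ in_parab e I (gmul (ginv (pcomp_hi e I w)) w).
Proof.
apply: (epsilon_spec (inhabits gone)
  (fun u => in_X e I u /\ in_parab e I (gmul (ginv u) w))).
by have [x [h1 h2]] := min_coset_exists I w; exists x; split=> //; apply: min_coset_X.
Qed.

Lemma pcomp_hi_X I w : in_X e I (pcomp_hi e I w).
Proof. by case: (pcomp_hi_spec I w). Qed.

Lemma pcomp_lo_parab I w : in_parab e I (pcomp_lo e I w).
Proof. by case: (pcomp_hi_spec I w). Qed.

Lemma pcomp_hi_lo I w : gmul (pcomp_hi e I w) (pcomp_lo e I w) = w.
Proof. exact: gmulKVg. Qed.

Lemma pcomp_mul I x y : in_X e I x -> in_parab e I y ->
  pcomp_hi e I (gmul x y) = x /\ pcomp_lo e I (gmul x y) = y.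
Proof.
move=> hX hy.
have hhi : pcomp_hi e I (gmul x y) = x.
  apply: (X_coset_uniq (@pcomp_hi_X I (gmul x y)) hX).
  have -> : gmul (ginv (pcomp_hi e I (gmul x y))) x =
            gmul (pcomp_lo e I (gmul x y)) (ginv y) by rewrite /pcomp_lo -gmulA gmulgK.
  exact: parab_mul (@pcomp_lo_parab I _) (parab_inv hy).
by split=> //; rewrite /pcomp_lo hhi gmulKg.
Qed.

Lemma X1 I : in_X e I gone.
Proof. by move=> a _; rewrite gmul1g (ell1 hcox) (ell_e hcox). Qed.

Lemma X_sub I J x : (forall a, I a -> J a) -> in_X e J x -> in_X e I x.
Proof. by move=> hIJ hX a /hIJ /hX. Qed.

Lemma X_mul J K h g : (forall a, K a -> J a) ->
  in_X e J h -> in_X e K g -> in_parab e J g -> in_X e K (gmul h g).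
Proof.
move=> hKJ hh hg hgJ a ha.
have hga : in_parab e J (gmul g (e a)) by apply: parab_mul hgJ (parab_e (hKJ _ ha)).
by rewrite -gmulA (ell_mul_X hh hga) (ell_mul_X hh hgJ) ltn_add2l; apply: hg.
Qed.

Lemma supp_mul_X I x w : in_X e I x -> in_parab e I w ->
  forall t, supp e w t -> supp e (gmul x w) t.
Proof.
move=> hX hw t [ws [hws hs ht]]; have [xs [hxs hs']] := reduced_word x.
exists (xs ++ ws); rewrite wprod_cat hxs hws mem_cat ht orbT size_cat.
by rewrite (ell_mul_X hX hw) hs' hs.
Qed.

End Parabolic.

Section Order.
Variables (W : group) (S : finType) (e : S -> W).
Hypothesis hcox : coxeter_system e.
Implicit Types (I J K : S -> Prop) (u v w x y : W).

Lemma cle_factor u v : cle e u v -> gmul (pcomp_hi e (supp e u) v) u = v.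
Proof. by move=> huv; rewrite -[in RHS](pcomp_hi_lo e (supp e u) v) huv. Qed.

Lemma cle_mul_X u y : in_X e (supp e u) y -> cle e u (gmul y u).
Proof. by move=> hy; case: (pcomp_mul hcox hy (supp_parab hcox u)). Qed.

Lemma supp_cle u v : cle e u v -> forall t, supp e u t -> supp e v t.
Proof.
move=> huv; rewrite -(cle_factor huv).
exact: supp_mul_X (pcomp_hi_X hcox _) (supp_parab hcox u).
Qed.

Lemma cle_parab u w : cle e u w -> in_parab e (supp e u) w -> w = u.
Proof.
move=> huw hw; have [_ hlo] := pcomp_mul hcox (X1 hcox (I:=supp e u)) hw.
by rewrite gmul1g in hlo; rewrite -huw hlo.
Qed.

Lemma Des_mul_X J h y s : in_X e J h -> in_parab e J y -> J s ->
  Des e (gmul h y) s <-> Des e y s.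
Proof.
move=> hh hy hs; have hys : in_parab e J (gmul y (e s)) := parab_mul hy (parab_e e hs).
by rewrite /Des -gmulA (ell_mul_X hcox hh hys) (ell_mul_X hcox hh hy) ltn_add2l.
Qed.

Lemma descent_supp y : y <> gone -> exists s, Des e y s /\ supp e y s.
Proof.
have [ws [hw hs]] := reduced_word hcox y.
case/lastP: ws hw hs => [<- //|ws s] hw hs _.
exists s; split; last by exists (rcons ws s); rewrite mem_rcons mem_head.
rewrite /Des; have -> : gmul y (e s) = wprod e ws.
  by rewrite -hw wprod_rcons -gmulA (e_sq hcox) gmulg1.
by rewrite -hs size_rcons ltnS ell_wprod.
Qed.

Lemma X_pcomp_lo I K y : (forall t, I t -> K t) ->
  in_X e I y -> in_X e I (pcomp_lo e K y).
Proof.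
move=> hIK hy a ha; have := hy a ha.
set y2 := pcomp_lo e K y; rewrite -(pcomp_hi_lo e K y) -/y2 -gmulA.
have hy2 : in_parab e K y2 := pcomp_lo_parab hcox K y.
rewrite !(ell_mul_X hcox (pcomp_hi_X hcox (I:=K) y)) ?ltn_add2l //.
exact: parab_mul hy2 (parab_e e (hIK _ ha)).
Qed.

Lemma pcomp_lo_mul_X J K h y : (forall t, K t -> J t) ->
  in_X e J h -> in_parab e J y -> pcomp_lo e K (gmul h y) = pcomp_lo e K y.
Proof.
move=> hKJ hh hy; set g := pcomp_hi e K y; set y2 := pcomp_lo e K y.
have hy2 : in_parab e K y2 := pcomp_lo_parab hcox K y.
have hgJ : in_parab e J g.
  have -> : g = gmul y (ginv y2) by rewrite /y2 /pcomp_lo ginvM ginvK gmulKVg.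
  exact: parab_mul hy (parab_inv hcox (parab_sub hKJ hy2)).
have hX : in_X e K (gmul h g) := X_mul hcox hKJ hh (pcomp_hi_X hcox (I:=K) y) hgJ.
rewrite -{1}(pcomp_hi_lo e K y) -/g -/y2 gmulA.
by case: (pcomp_mul hcox hX hy2).
Qed.

Lemma pcomp_lo_hi_cle u u' v : cle e u u' -> cle e u' v -> cle e u v ->
  pcomp_lo e (supp e u') (pcomp_hi e (supp e u) v) = pcomp_hi e (supp e u) u'.
Proof.
move=> huu' hu'v huv; set J := supp e u'; set x := pcomp_hi e (supp e u) v.
have huJ : in_parab e J u := parab_sub (supp_cle huu') (supp_parab hcox u).
have hJv : pcomp_lo e J v = gmul (pcomp_lo e J x) u.
  rewrite -(cle_factor huv) -/x -{1}(pcomp_hi_lo e J x) -gmulA.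
  by case: (pcomp_mul hcox (pcomp_hi_X hcox (I:=J) x)
                      (parab_mul (pcomp_lo_parab hcox J x) huJ)).
by apply: (@gmulIr _ u); rewrite -hJv hu'v cle_factor.
Qed.

Lemma cle_pcomp_lo_mul u y K : (forall t, supp e u t -> K t) ->
  in_X e (supp e u) y ->
  cle e u (gmul (pcomp_lo e K y) u) /\ cle e (gmul (pcomp_lo e K y) u) (gmul y u).
Proof.
move=> hK hy; split; first exact/cle_mul_X/X_pcomp_lo.
set w := gmul (pcomp_lo e K y) u.
have hwK : in_parab e K w.
  exact: parab_mul (pcomp_lo_parab hcox K y) (parab_sub hK (supp_parab hcox u)).
have -> : gmul y u = gmul (pcomp_hi e K y) w by rewrite /w gmulA pcomp_hi_lo.
apply/cle_mul_X/(X_sub _ (pcomp_hi_X hcox (I:=K) y)).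
exact: (parab_supp hcox hwK).
Qed.

Lemma cover_eq_pcomp_lo u u' K : cle e u u' ->
  ~ (exists w, clt e u w /\ clt e w u') -> (forall t, supp e u t -> K t) ->
  pcomp_lo e K (pcomp_hi e (supp e u) u') <> gone ->
  u' = gmul (pcomp_lo e K (pcomp_hi e (supp e u) u')) u.
Proof.
move=> huu' hcov hK hne.
have [h1 h2] := cle_pcomp_lo_mul hK (pcomp_hi_X hcox (I:=supp e u) u').
rewrite (cle_factor huu') in h2.
apply: NNPP => hneq; apply: hcov; eexists; split; split; [exact: h1 | | exact: h2 |].
- by move=> h; apply: hne; apply: (@gmulIr _ u); rewrite gmul1g.
- by move=> h; apply: hneq.
Qed.

Lemma supp_cover u w s : cle e u w -> w <> u ->
  in_parab e (fun t => supp e u t \/ t = s) w ->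
  forall t, supp e w t <-> supp e u t \/ t = s.
Proof.
move=> huw hne hw t; split; first exact: (parab_supp hcox hw (s:=t)).
case=> [/(supp_cle huw) // | ->].
apply: NNPP => hs; apply: hne; apply: (cle_parab huw).
apply: parab_sub (supp_parab hcox w) => r hr.
by case: (parab_supp hcox hw hr) => // hrs; rewrite hrs in hr.
Qed.

End Order.

Theorem mainTheorem10 (W : group) (S : finType) (e : S -> W)
  (hcox : coxeter_system e) (u v u' : W) :
  clt e u v -> covers_in e u v u' ->
  exists s : S,
    [/\ Des e (pcomp_hi e (supp e u) v) s,
        u' = gmul (pcomp_lo e (fun t => supp e u t \/ t = s)
                             (pcomp_hi e (supp e u) v)) u &
        forall t, csupp e u' t <-> (csupp e u t /\ t <> s)].
Proof.
move=> [huv _] [[huu' hneq] hu'v hcov].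
set I := supp e u; set x := pcomp_hi e I v; set y := pcomp_hi e I u'.
have hy_ne1 : y <> gone.
  by move=> hy; apply: hneq; rewrite -(cle_factor huu') -/y hy gmul1g.
have [s [hys hsy]] := descent_supp hcox hy_ne1.
pose K t := I t \/ t = s.
have hxy : pcomp_lo e (supp e u') x = y := pcomp_lo_hi_cle hcox huu' hu'v huv.
have hy_u' : in_parab e (supp e u') y by rewrite -hxy; apply: pcomp_lo_parab.
have hs_u' : supp e u' s := parab_supp hcox hy_u' hsy.
have hK_u' t : K t -> supp e u' t by case=> [/(supp_cle hcox huu') | ->].
have hx : gmul (pcomp_hi e (supp e u') x) y = x by rewrite -hxy pcomp_hi_lo.
have hyK_s : Des e (pcomp_lo e K y) s.
  apply/(Des_mul_X hcox (pcomp_hi_X hcox (I:=K) y) (pcomp_lo_parab hcox K y)).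
    by right.
  by rewrite pcomp_hi_lo.
have hu' := cover_eq_pcomp_lo hcox huu' hcov (fun t => @or_introl _ _) (Des_neq1 hcox hyK_s).
have hu'K : in_parab e K u'.
  rewrite hu'; apply: parab_mul (pcomp_lo_parab hcox K y) _.
  by apply: parab_sub (supp_parab hcox u); left.
exists s; split.
- by rewrite -hx; apply/(Des_mul_X hcox (pcomp_hi_X hcox x) hy_u' hs_u').
- by rewrite -hx (pcomp_lo_mul_X hcox hK_u' (pcomp_hi_X hcox x) hy_u').
- move=> t; have := supp_cover hcox huu' (nesym hneq) hu'K t.
  by rewrite /csupp; tauto.
Qed.
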